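(* Let $\ell\ge1$ and $d\ge 2$ be integers. Then $\omega(\mathcal{B}(1,d))=d-1$ and $\omega(\mathcal{B}(2,d))=d^2-d$, and for $\ell\ge 3$, $$d^{\ell}-d^{\ell-1}\le \omega(\mathcal{B}(\ell,d))\le d^{\ell}-d^{\lfloor \ell/2\rfloor}-\left(\lfloor \ell/2\rfloor-1\right).$$
   Context: The BCube $\mathcal{B}(\ell,d)$ ($\ell,d$ positive integers) is the symmetric digraph defined as follows, with $\mathbb{Z}_d=\{0,1,\dots,d-1\}$. - Hosts: all vectors $\mathbf{h}=h_1\cdots h_\ell\in\mathbb{Z}_d^{\ell}$. - Switches: for each layer $k\in\{1,\dots,\ell\}$, one switch $\mathbf{s}^k$ for each vector $s^k_1\cdots s^k_{\ell-1}\in\mathbb{Z}_d^{\ell-1}$. Switches of different layers are distinct vertices. - Links: host $\mathbf{h}$ and layer-$k$ switch $\mathbf{s}^k$ are joined if and only if $s^k_1\cdots s^k_{\ell-1}=h_1\cdots h_{k-1}h_{k+1}\cdots h_\ell$. Each such link gives two arcs, an uplink (host $\to$ switch) and a downlink (switch $\to$ host). There are no other arcs. A host-to-host routing $R$ assigns to every ordered pair of distinct hosts a directed path from the first to the second in $\mathcal{B}(\ell,d)$. $\omega(\mathcal{B}(\ell,d),R)$ is the minimum number of colors (wavelengths) needed to color the paths of $R$ so that any two paths sharing an arc get different colors. The optical index is $\omega(\mathcal{B}(\ell,d))=\min_R\omega(\mathcal{B}(\ell,d),R)$, the minimum taken over all host-to-host routings $R$. *)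

From Stdlib Require Import ClassicalEpsilon.
From mathcomp Require Import all_boot.
Set Implicit Arguments. Unset Strict Implicit. Unset Printing Implicit Defensive.

Definition host (l d : nat) := {ffun 'I_l -> 'I_d}.
(* Switches: a layer k (in 'I_l) together with a vector in Z_d^(l-1). *)
Definition switch (l d : nat) := ('I_l * {ffun 'I_l.-1 -> 'I_d})%type.
Definition vertex (l d : nat) := (host l d + switch l d)%type.

(* Index in 'I_l of the i-th coordinate that remains after deleting coordinate k
   (i.e. i if i < k, i+1 otherwise).  The default k is never used. *)
Definition delidx (l : nat) (k : 'I_l) (i : 'I_l.-1) : 'I_l := insubd k (bump k i).

Definition linked (l d : nat) (h : host l d) (s : switch l d) : bool :=
  [forall i : 'I_l.-1, s.2 i == h (delidx s.1 i)].

Definition arc (l d : nat) : rel (vertex l d) :=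
  fun u v => match u, v with
             | inl h, inr s => linked h s
             | inr s, inl h => linked h s
             | _, _ => false
             end.

(* A directed path from x to y, given as the list p of vertices after x:
   vertices x :: p, consecutive vertices joined by arcs, no repeated vertex. *)
Definition dipath (l d : nat) (x y : vertex l d) (p : seq (vertex l d)) : bool :=
  [&& path (@arc l d) x p, last x p == y & uniq (x :: p)].

Definition routing (l d : nat) := host l d -> host l d -> seq (vertex l d).

Definition is_routing (l d : nat) (R : routing l d) : Prop :=
  forall a b : host l d, a != b -> dipath (inl a) (inl b) (R a b).

Definition path_arcs (l d : nat) (R : routing l d) (a b : host l d) :
  seq (vertex l d * vertex l d) := zip (inl a :: R a b) (R a b).

Definition proper_coloring (l d : nat) (R : routing l d) {k : nat}
  (c : host l d -> host l d -> 'I_k) : Prop :=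
  forall a b a' b' : host l d, a != b -> a' != b' -> (a, b) != (a', b') ->
    has (fun e => e \in path_arcs R a' b') (path_arcs R a b) ->
    c a b != c a' b'.

Definition colorable_with (l d : nat) (R : routing l d) (k : nat) : Prop :=
  exists c : host l d -> host l d -> 'I_k, proper_coloring R c.

Definition optical_ok (l d k : nat) : Prop :=
  exists R : routing l d, is_routing R /\ colorable_with R k.

(* The optical index omega(B(l,d)): the least k such that optical_ok l d k
   (chosen by classical description; such a least k exists). *)
Definition optical_index (l d : nat) : nat :=
  epsilon (inhabits 0%N)
    (fun w => optical_ok l d w /\ forall k, optical_ok l d k -> (w <= k)%N).

(* Lower bound: a pair (a, b) with a_j <> b_j must climb from some host x to
   the layer-j switch of x, and paths sharing that uplink get distinct colours,
   so the pair is determined by x and its colour; thus the d^l (d^l - d^(l-1))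
   such pairs fit into d^l * K slots.
   Upper bound: route a to b by correcting the coordinates in increasing order
   and colour the path by the difference b - a.  Two paths sharing an arc pass
   through a common intermediate host and both correct the coordinate of that
   arc, so equal differences force equal endpoints, and differences with
   disjoint supports may share a colour.  Moving the d^m vectors supported on
   the first m = l/2 coordinates onto the next m coordinates, and merging the
   unit vectors e_m, ..., e_(2m-1) into one class, saves d^m + m - 1 of the
   d^l colours (the zero difference never occurs). *)

From Pilot Require Import Defs.
From mathcomp Require Import all_boot all_algebra zify.
From Stdlib Require Import ClassicalEpsilon Classical Wf_nat.
Set Implicit Arguments. Unset Strict Implicit. Unset Printing Implicit Defensive.
Import GRing.Theory.

Lemma card_ffun_coord_eq l d (j : 'I_l) (v : 'I_d) :
  #|[set f : {ffun 'I_l -> 'I_d} | f j == v]| = d ^ l.-1.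
Proof.
pose F i := if i == j then pred1 v else predT.
have -> : #|[set f : {ffun 'I_l -> 'I_d} | f j == v]| = #|family F|.
  apply: eq_card => f; rewrite inE; apply/idP/familyP => [/eqP fj i|Ff].
    by rewrite /F; case: eqP => [->|]; rewrite ?fj //= inE.
  by have := Ff j; rewrite /F eqxx.
rewrite card_family foldrE big_map big_enum /= (bigD1 j) //= /F eqxx card1 mul1n.
rewrite (eq_bigr (fun _ => d)); last by move=> i /negbTE ->; rewrite card_ord.
by rewrite prod_nat_const cardC1 card_ord.
Qed.

Lemma delidxE l (k : 'I_l) (i : 'I_l.-1) : val (delidx k i) = bump k i.
Proof.
rewrite /delidx val_insubd; case: ifP => // /negP [].
by have := ltn_ord i; have := ltn_ord k; rewrite /bump; case: (k <= i) => /=; lia.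
Qed.

Section Switches.
Variables l d : nat.
Implicit Types (x y : host l d) (s : switch l d).

Definition switch_of (k : 'I_l) x : switch l d := (k, [ffun i => x (delidx k i)]).

Lemma linked_switch_of k x : linked x (switch_of k x).
Proof. by apply/forallP => i; rewrite ffunE. Qed.

Lemma linked_switch_ofP x s : linked x s -> s = switch_of s.1 x.
Proof.
case: s => k f /forallP /= xf; congr pair; apply/ffunP => i.
by rewrite ffunE; apply/eqP.
Qed.

Lemma linked_coord_eq x y s (k : 'I_l) :
  linked x s -> linked y s -> k != s.1 -> x k = y k.
Proof.
move=> /forallP xs /forallP ys ks.
have ks' : val k != val s.1 := ks.
have ltk : unbump s.1 k < l.-1.
  by have := ltn_ord k; have := ltn_ord s.1; move: ks'; rewrite /unbump; case: ltnP => /=; lia.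
have ek : delidx s.1 (Ordinal ltk) = k.
  by apply: val_inj; rewrite delidxE /= unbumpKcond; move: ks'; rewrite eq_sym => /negbTE ->.
by move: (xs (Ordinal ltk)) (ys (Ordinal ltk)); rewrite ek => /eqP <- /eqP.
Qed.

Lemma path_uses_uplink (k : 'I_l) (a b : host l d) (p : seq (vertex l d)) :
  path (@Defs.arc l d) (inl a) p -> last (inl a) p = inl b -> a k != b k ->
  exists x, (inl x, inr (switch_of k x)) \in zip (inl a :: p) p.
Proof.
move: (leqnn (size p)); move: {2}(size p) => n.
elim: n p a => [|n IH] [|v p] a //= sz.
1,2: by move=> _ [->]; rewrite eqxx.
case: v => [//|s] /= /andP [las pa] lb ab.
case: (eqVneq s.1 k) => [sk|sk].
  by exists a; rewrite inE -sk -(linked_switch_ofP las) eqxx.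
case: p sz pa lb => [|[a'|//] p] //= sz /andP [la' pa] lb.
have eak : a k = a' k by apply: (linked_coord_eq las la'); rewrite eq_sym.
have sz' : size p <= n by lia.
have ab' : a' k != b k by rewrite -eak.
have [x xp] := IH p a' sz' pa lb ab'.
by exists x; rewrite !inE xp !orbT.
Qed.

End Switches.

Lemma card_host l d : #|host l d| = d ^ l.
Proof. by rewrite card_ffun !card_ord. Qed.

Lemma card_pairs_coord_neq l d (j : 'I_l) :
  #|[set ab : host l d * host l d | ab.1 j != ab.2 j]| = d ^ l * (d ^ l - d ^ l.-1).
Proof.
have -> : #|[set ab : host l d * host l d | ab.1 j != ab.2 j]| =
    \sum_(a : host l d) \sum_(b : host l d) (a j != b j).
  by rewrite -sum1_card big_mkcond pair_bigA; apply: eq_bigr => -[a b] _; rewrite inE.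
rewrite -{1}(card_host l d) -sum_nat_const; apply: eq_bigr => a _.
rewrite -(card_host l d) -(card_ffun_coord_eq j (a j)) -(cardsC [set f : host l d | f j == a j]).
rewrite addKn -sum1_card [RHS]big_mkcond.
by apply: eq_bigr => b _; rewrite !inE eq_sym.
Qed.

Lemma optical_ok_lower l d K : 0 < l -> 0 < d -> optical_ok l d K -> d ^ l - d ^ l.-1 <= K.
Proof.
move=> l_gt0 d_gt0 [R [R_routing [c c_proper]]].
pose j : 'I_l := Ordinal l_gt0.
pose S := [set ab : host l d * host l d | ab.1 j != ab.2 j].
pose crosses ab x := (inl x, inr (switch_of j x)) \in path_arcs R ab.1 ab.2.
pose cross ab := odflt ab.1 [pick x | crosses ab x].
have crossP ab : ab \in S -> crosses ab (cross ab).
  rewrite inE => abj; have ab_neq : ab.1 != ab.2 by apply: contraNneq abj => ->.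
  have /and3P [pa /eqP la _] := R_routing _ _ ab_neq.
  have [x xp] := path_uses_uplink pa la abj.
  by rewrite /cross; case: pickP => [//|/(_ x)]; rewrite /crosses xp.
have inj : {in S &, injective (fun ab => (cross ab, c ab.1 ab.2))}.
  move=> [a b] [a' b'] abS abS' [ex ec]; apply/eqP/negPn/negP => ne.
  have ab : a != b by move: abS; rewrite inE; apply: contraNneq => ->.
  have ab' : a' != b' by move: abS'; rewrite inE; apply: contraNneq => ->.
  have shared : has (fun e => e \in path_arcs R a' b') (path_arcs R a b).
    apply/hasP; exists (inl (cross (a, b)), inr (switch_of j (cross (a, b)))).
      exact: crossP.
    by rewrite ex; apply: crossP.
  by move: (c_proper _ _ _ _ ab ab' ne shared); rewrite ec eqxx.
have := max_card [set (cross ab, c ab.1 ab.2) | ab in S].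
rewrite card_in_imset // card_pairs_coord_neq card_prod card_host card_ord.
by rewrite leq_pmul2l // expn_gt0 d_gt0.
Qed.

Lemma zip_cat_last T (x : T) (s t : seq T) :
  zip (x :: s ++ t) (s ++ t) = zip (x :: s) s ++ zip (last x s :: t) t.
Proof. by elim: s x => [|y s IH] x //=; rewrite IH. Qed.

Section DimensionOrderRouting.
Variables l d : nat.
Implicit Types a b : host l d.

Definition hybrid a b (k : nat) : host l d := [ffun i : 'I_l => if i < k then b i else a i].

Definition hop a b (k : nat) : seq (vertex l d) :=
  if insub k is Some i then
    if a i != b i then [:: inr (switch_of i (hybrid a b k)); inl (hybrid a b k.+1)] else [::]
  else [::].

Fixpoint route a b (n : nat) : seq (vertex l d) :=
  if n is n'.+1 then route a b n' ++ hop a b n' else [::].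

Lemma hybrid0 a b : hybrid a b 0 = a.
Proof. by apply/ffunP => i; rewrite ffunE. Qed.

Lemma hybrid_full a b : hybrid a b l = b.
Proof. by apply/ffunP => i; rewrite ffunE ltn_ord. Qed.

Lemma hybridS a b n : (forall i : 'I_l, val i = n -> a i = b i) ->
  hybrid a b n.+1 = hybrid a b n.
Proof.
move=> abn; apply/ffunP => i; rewrite !ffunE ltnS leq_eqVlt.
by case: (eqVneq (val i) n) => [ein|] //=; rewrite ein ltnn abn.
Qed.

Lemma linked_hybridS a b (i : 'I_l) :
  linked (hybrid a b i.+1) (switch_of i (hybrid a b i)).
Proof.
apply/forallP => k; rewrite /= !ffunE.
have ne : (delidx i k : nat) != i by rewrite delidxE eq_sym neq_bump.
by have -> : (delidx i k < i.+1) = (delidx i k < i) by apply/idP/idP; move: ne; lia.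
Qed.

Lemma route_path a b n :
  path (@Defs.arc l d) (inl a) (route a b n) && (last (inl a) (route a b n) == inl (hybrid a b n)).
Proof.
elim: n => [|n IH] /=; first by rewrite hybrid0.
move/andP: IH => [pa /eqP la].
rewrite cat_path last_cat pa la /= /hop.
case: insubP => [i _ ei|nl].
  case: eqP => [abi|/eqP abi] /=.
    by rewrite hybridS // => i' ei'; congr (a _ = b _): abi; apply: val_inj; rewrite ei ei'.
  by rewrite -ei linked_switch_of linked_hybridS eqxx.
by rewrite hybridS //= => i ei; move: nl; rewrite -ei ltn_ord.
Qed.

Lemma route_switch_lt a b n s : inr s \in route a b n -> s.1 < n.
Proof.
elim: n => [|n IH] //=; rewrite mem_cat => /orP [/IH/leqW //|].
rewrite /hop; case: insubP => [i _ <-|//]; case: ifP => // _.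
by rewrite !inE => /orP [/eqP [->]|].
Qed.

Lemma route_host_eq a b n h : inl h \in inl a :: route a b n ->
  forall i : 'I_l, n <= i -> h i = a i.
Proof.
elim: n => [|n IH] /=; first by rewrite mem_seq1 => /eqP [->].
rewrite -cat_cons mem_cat => /orP [/IH hn i ni|]; first by apply: hn; lia.
rewrite /hop; case: insubP => [k _ _|//]; case: ifP => // _.
rewrite !inE => /orP [//|/eqP [->]] i ni.
by rewrite ffunE; case: ltnP => //; lia.
Qed.

Lemma route_uniq a b n : uniq (inl a :: route a b n).
Proof.
elim: n => [|n IH] //; rewrite [route _ _ _]/= -cat_cons cat_uniq IH /= /hop.
case: insubP => [i _ ei|//]; case: eqP => [//|/eqP abi].
have new_switch : inr (switch_of i (hybrid a b n)) \notin inl a :: route a b n.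
  by apply/negP; rewrite inE /= => /route_switch_lt; rewrite /= ei ltnn.
have new_host : inl (hybrid a b n.+1) \notin inl a :: route a b n.
  apply/negP => /route_host_eq /(_ i); rewrite ei leqnn ffunE -ei ltnSn.
  by move=> /(_ isT) bai; rewrite bai eqxx in abi.
by rewrite /= orbF (negbTE new_switch) (negbTE new_host).
Qed.

Lemma route_arcs a b n e : e \in zip (inl a :: route a b n) (route a b n) ->
  exists2 i : 'I_l, a i != b i &
    e = (inl (hybrid a b i), inr (switch_of i (hybrid a b i))) \/
    e = (inr (switch_of i (hybrid a b i)), inl (hybrid a b i.+1)).
Proof.
elim: n => [|n IH] //=; have /andP [_ /eqP last_route] := route_path a b n.
rewrite zip_cat_last last_route mem_cat => /orP [/IH //|]; rewrite /hop.
case: insubP => [i _ <-|//]; case: eqP => [//|/eqP abi].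
by rewrite !inE => /orP [] /eqP ->; exists i => //; [left | right].
Qed.

Lemma route_shared_arc a b a' b' n e :
  e \in zip (inl a :: route a b n) (route a b n) ->
  e \in zip (inl a' :: route a' b' n) (route a' b' n) ->
  exists2 i : 'I_l, a i != b i /\ a' i != b' i &
    hybrid a b i = hybrid a' b' i \/ hybrid a b i.+1 = hybrid a' b' i.+1.
Proof.
move=> /route_arcs [i abi ei] /route_arcs [i' abi' ei'].
case: ei ei' => -> [] [] //.
- by move=> hybrid_eq ii _; subst i'; exists i => //; left.
- by move=> ii _ hybrid_eq; subst i'; exists i => //; right.
Qed.

End DimensionOrderRouting.

(* With d = n.+2 the coordinates 'I_d form the ring Z/dZ, so hosts can be
   subtracted coordinatewise. *)
Section Palette.
Variables l m n : nat.
Hypothesis mml : m + m <= l.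
Local Notation vec := (host l n.+2).
Implicit Types x y : vec.

Definition coordn x (k : nat) : 'I_n.+2 := if insub k is Some i then x i else 0%R.

Definition vec_of (f : nat -> 'I_n.+2) : vec := [ffun i : 'I_l => f i].

Lemma coordnE x (i : 'I_l) : coordn x i = x i.
Proof. by rewrite /coordn valK. Qed.

Lemma coordn_vec_of f k : coordn (vec_of f) k = if k < l then f k else 0%R.
Proof.
rewrite /coordn; case: insubP => [i _ <-|/negbTE -> //].
by rewrite ltn_ord ffunE.
Qed.

Lemma coordn_inj x y : (forall k, coordn x k = coordn y k) -> x = y.
Proof. by move=> xy; apply/ffunP => i; rewrite -!coordnE xy. Qed.

Definition disjoint_supports x y := forall k, coordn x k = 0%R \/ coordn y k = 0%R.

Definition low x := [forall i : 'I_l, (m <= i) ==> (x i == 0%R)].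

Lemma lowP x : reflect (forall k, m <= k -> coordn x k = 0%R) (low x).
Proof.
apply: (iffP forallP) => [xlow k mk|xlow i].
  rewrite /coordn; case: insubP => [i _ ei|//].
  by have := xlow i; rewrite ei mk => /eqP.
by apply/implyP => mi; rewrite -coordnE xlow.
Qed.

Definition shift x := vec_of (fun k => if m <= k < m + m then coordn x (k - m) else 0%R).

Lemma coordn_shift x k : coordn (shift x) k = if m <= k < m + m then coordn x (k - m) else 0%R.
Proof. by rewrite coordn_vec_of; case: ltnP => // lk; case: ifP => //; lia. Qed.

Definition delta (j : nat) : vec := vec_of (fun k => if k == j then 1 else 0)%R.

Lemma coordn_delta j k : j < l -> coordn (delta j) k = (if k == j then 1 else 0)%R.
Proof. by move=> jl; rewrite coordn_vec_of; case: ltnP => // lk; case: eqP => //; lia. Qed.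

Lemma delta_inj j j' : j < l -> j' < l -> delta j = delta j' -> j = j'.
Proof.
move=> jl j'l ejj'; have := coordn_delta j jl; rewrite ejj' coordn_delta // eqxx.
by case: eqP => // _ /eqP; rewrite oner_eq0.
Qed.

Lemma disjoint_supports_sym x y : disjoint_supports x y -> disjoint_supports y x.
Proof. by move=> xy k; case: (xy k); [right | left]. Qed.

Lemma shift_inj x y : low x -> low y -> shift x = shift y -> x = y.
Proof.
move=> /lowP xlow /lowP ylow exy; apply: coordn_inj => k.
case: (ltnP k m) => km; last by rewrite xlow ?ylow.
have := coordn_shift x (k + m); rewrite exy coordn_shift.
have -> : m <= k + m < m + m by lia.
by rewrite addnK.
Qed.

Lemma shift_disjoint x : low x -> disjoint_supports x (shift x).
Proof.
move=> /lowP xlow k; rewrite coordn_shift.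
by case: (ltnP k m) => km; [right | left; apply: xlow].
Qed.

Definition lift_low x := if low x then shift x else x.

Lemma lift_low_inj x y : lift_low x = lift_low y -> x = y \/ disjoint_supports x y.
Proof.
rewrite /lift_low; case: ifP => xlow; case: ifP => ylow exy.
- by left; apply: shift_inj.
- by right; rewrite -exy; apply: shift_disjoint.
- by right; rewrite exy; apply/disjoint_supports_sym/shift_disjoint.
- by left.
Qed.

Lemma lift_low_delta_support x j k : m <= j < m + m -> lift_low x = delta j ->
  coordn x k != 0%R -> k = j \/ k + m = j.
Proof.
move=> jm; have jl : j < l by lia.
rewrite /lift_low; case: ifP => [/lowP xlow|_] exj xk; last first.
  by move: xk; rewrite exj coordn_delta //; case: (k =P j) => [|_]; [left | rewrite eqxx].
have km : k < m by case: (ltnP k m) => // mk; rewrite xlow in xk.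
have := coordn_shift x (k + m); rewrite exj coordn_delta //.
have -> : m <= k + m < m + m by lia.
by rewrite addnK; case: (k + m =P j) => [|_ xk0]; [right | rewrite -xk0 eqxx in xk].
Qed.

Lemma lift_low_deltas_disjoint x y j j' :
  m <= j < m + m -> m <= j' < m + m -> j != j' ->
  lift_low x = delta j -> lift_low y = delta j' -> disjoint_supports x y.
Proof.
move=> jm j'm jj' xj yj' k.
case: (eqVneq (coordn x k) 0%R) => [|xk]; first by left.
case: (eqVneq (coordn y k) 0%R) => [|yk]; first by right.
have := lift_low_delta_support jm xj xk; have := lift_low_delta_support j'm yj' yk.
by move: jj'; lia.
Qed.

Definition merged_deltas := [set delta (m.+1 + j) | j : 'I_m.-1].

Lemma merged_deltasP x : x \in merged_deltas -> exists2 j, m < j < m + m & x = delta j.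
Proof. by move=> /imsetP [j _ ->]; exists (m.+1 + j) => //; have := ltn_ord j; lia. Qed.

Definition color x := if lift_low x \in merged_deltas then delta m else lift_low x.

Lemma color_delta x : 0 < m -> color x = delta m ->
  exists2 j, m <= j < m + m & lift_low x = delta j.
Proof.
move=> m_gt0; rewrite /color; case: ifP => [/merged_deltasP [j jm ->] _|_ ->].
  by exists j => //; lia.
by exists m => //; lia.
Qed.

Lemma color_eq x y : color x = color y -> x = y \/ disjoint_supports x y.
Proof.
move=> exy.
case: (boolP ((lift_low x \in merged_deltas) || (lift_low y \in merged_deltas)))
  => [merged_xy|]; last first.
  rewrite negb_or => /andP [/negbTE x_unmerged /negbTE y_unmerged].
  by apply: lift_low_inj; move: exy; rewrite /color x_unmerged y_unmerged.
have m_gt0 : 0 < m by case/orP: merged_xy => /merged_deltasP [j jm _]; lia.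
have cx : color x = delta m.
  have : color x = delta m \/ color y = delta m.
    by rewrite /color; case/orP: merged_xy => ->; [left | right].
  by case=> [|<-].
have cy : color y = delta m by rewrite -exy.
have [j jm xj] := color_delta m_gt0 cx; have [j' j'm yj'] := color_delta m_gt0 cy.
case: (eqVneq j j') => [ejj'|jj']; last by right; apply: lift_low_deltas_disjoint jj' xj yj'.
by apply: lift_low_inj; rewrite xj yj' ejj'.
Qed.

Definition palette := ~: ([set x | low x] :|: merged_deltas).

Hypothesis l_gt0 : 0 < l.

Lemma delta_m_palette : delta m \in palette.
Proof.
have ml : m < l by lia.
rewrite !inE negb_or; apply/andP; split.
  by apply/lowP => /(_ m (leqnn m)); rewrite coordn_delta // eqxx => /eqP; rewrite oner_eq0.
by apply/negP => /merged_deltasP [j jm /delta_inj]; lia.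
Qed.

Lemma color_palette x k : coordn x k != 0%R -> color x \in palette.
Proof.
move=> xk; rewrite /color; case: ifP => x_unmerged; first exact: delta_m_palette.
rewrite !inE negb_or x_unmerged andbT /lift_low; case: ifP => [/lowP xlow|->//].
have km : k < m by case: (ltnP k m) => // mk; rewrite xlow in xk.
apply/lowP => /(_ (k + m) (leq_addl _ _)); rewrite coordn_shift.
have -> : m <= k + m < m + m by lia.
by rewrite addnK => /eqP; rewrite (negbTE xk).
Qed.

Lemma card_palette : #|palette| <= n.+2 ^ l - n.+2 ^ m - (m - 1).
Proof.
have card_low : n.+2 ^ m <= #|[set x | low x]|.
  pose ext (f : {ffun 'I_m -> 'I_n.+2}) := vec_of (fun k => if insub k is Some i then f i else 0%R).
  have coordn_ext f (i : 'I_m) : coordn (ext f) i = f i.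
    by rewrite coordn_vec_of valK; case: ltnP => //; have := ltn_ord i; lia.
  have ext_inj : injective ext by move=> f g efg; apply/ffunP => i; rewrite -!coordn_ext efg.
  have -> : n.+2 ^ m = #|{ffun 'I_m -> 'I_n.+2}| by rewrite card_ffun !card_ord.
  rewrite -(card_imset _ ext_inj); apply/subset_leq_card/subsetP => _ /imsetP [f _ ->].
  rewrite inE; apply/lowP => k mk; rewrite coordn_vec_of.
  by case: ifP => // _; case: insubP => [i km _|//]; lia.
have card_merged : #|merged_deltas| = m - 1.
  rewrite card_in_imset ?card_ord; first by lia.
  move=> j j' _ _ /delta_inj ejj'; apply: ord_inj.
  by have := ltn_ord j; have := ltn_ord j'; move: ejj'; lia.
have low_merged_disjoint : [disjoint [set x | low x] & merged_deltas].
  apply/pred0P => x /=; rewrite !inE; apply/negP => /andP [/lowP xlow /merged_deltasP [j jm xj]].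
  have [mj jl] : m <= j /\ j < l by lia.
  by move: (xlow j mj); rewrite xj coordn_delta // eqxx => /eqP; rewrite oner_eq0.
rewrite cardsCs setCK cardsU (disjoint_setI0 low_merged_disjoint) cards0 subn0 card_host card_merged.
by move: card_low; lia.
Qed.

End Palette.

Lemma hybrid_diff_inj l n (a b a' b' : host l n.+2) k :
  (b - a = b' - a')%R -> hybrid a b k = hybrid a' b' k -> a = a' /\ b = b'.
Proof.
move=> ediff ehyb.
have coordn_eq i : a i = a' i /\ b i = b' i.
  have := congr1 (fun x : host l n.+2 => x i) ediff; rewrite !ffunE => db.
  have := congr1 (fun x : host l n.+2 => x i) ehyb; rewrite !ffunE; case: ifP => _ e;
    rewrite e in db; split=> //.
  - exact/oppr_inj/(addrI _ db).
  - exact: addIr db.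
by split; apply/ffunP => i; case: (coordn_eq i).
Qed.

Lemma coordn_diff_neq0 l n (a b : host l n.+2) (i : 'I_l) :
  a i != b i -> coordn (b - a)%R i != 0%R.
Proof. by rewrite coordnE !ffunE subr_eq0 eq_sym. Qed.

Lemma optical_ok_widen l d k k' : k <= k' -> optical_ok l d k -> optical_ok l d k'.
Proof.
move=> kk' [R [R_routing [c c_proper]]]; exists R; split => //.
exists (fun a b => widen_ord kk' (c a b)) => a b a' b' ab ab' neq shared.
by apply: contra (c_proper _ _ _ _ ab ab' neq shared) => /eqP [] /val_inj ->.
Qed.

Lemma optical_ok_upper l n m : 0 < l -> m + m <= l ->
  optical_ok l n.+2 (n.+2 ^ l - n.+2 ^ m - (m - 1)).
Proof.
move=> l_gt0 mml; apply: optical_ok_widen (card_palette n mml l_gt0) _.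
have delta_m_in := delta_m_palette n mml l_gt0.
exists (fun a b => route a b l); split.
  move=> a b _; have /andP [pa /eqP la] := route_path a b l.
  by rewrite /dipath pa la hybrid_full eqxx route_uniq.
exists (fun a b => enum_rank_in delta_m_in (color m (b - a)%R)).
have color_diff_palette (a b : host l n.+2) : a != b -> color m (b - a)%R \in palette l m n.
  move=> ab; have [i abi] : exists i, a i != b i.
    apply/existsP; apply: contraNT ab => /existsPn same.
    by apply/eqP/ffunP => i; apply/eqP/negPn/same.
  exact: (color_palette mml l_gt0 (coordn_diff_neq0 abi)).
move=> a b a' b' ab ab' neq /hasP [e e1 e2]; apply/negP => /eqP ec.
have ecol := enum_rank_in_inj (color_diff_palette _ _ ab) (color_diff_palette _ _ ab') ec.
have [i [abi abi'] ehyb] := route_shared_arc e1 e2.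
case: (color_eq mml ecol) => [ediff|disj].
  have [ea eb] : a = a' /\ b = b' by case: ehyb; apply: hybrid_diff_inj.
  by rewrite ea eb eqxx in neq.
by case: (disj i); apply/eqP; apply: coordn_diff_neq0.
Qed.

Lemma optical_index_spec l d k : optical_ok l d k ->
  optical_ok l d (optical_index l d) /\ forall k', optical_ok l d k' -> optical_index l d <= k'.
Proof.
move=> ok; rewrite /optical_index; apply: (epsilon_spec (inhabits 0%N)
  (fun w => optical_ok l d w /\ forall k, optical_ok l d k -> w <= k)).
have [w [[okw wmin] _]] := dec_inh_nat_subset_has_unique_least_element (optical_ok l d)
  (fun k => classic (optical_ok l d k)) (ex_intro _ k ok).
by exists w; split=> // k' /wmin /leP.
Qed.

Lemma optical_index_bounds l d : 0 < l -> 1 < d ->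
  d ^ l - d ^ l.-1 <= optical_index l d <= d ^ l - d ^ l./2 - (l./2 - 1).
Proof.
move=> l_gt0; case: d => [|[|n]] // _.
have ok_bound := optical_ok_upper n l_gt0 (ltac:(lia) : l./2 + l./2 <= l).
have [ok_index index_min] := optical_index_spec ok_bound.
by rewrite optical_ok_lower // index_min.
Qed.

Theorem theorem2 (d : nat) (hd : (2 <= d)%N) :
  optical_index 1 d = (d - 1)%N /\
  optical_index 2 d = (d ^ 2 - d)%N /\
  (forall l : nat, (3 <= l)%N ->
     (d ^ l - d ^ l.-1 <= optical_index l d)%N /\
     (optical_index l d <= d ^ l - d ^ l./2 - (l./2 - 1))%N).
Proof.
have /andP [lo1 up1] := optical_index_bounds (isT : 0 < 1) hd.
have /andP [lo2 up2] := optical_index_bounds (isT : 0 < 2) hd.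
split; last split.
- by apply/eqP; rewrite eqn_leq; move: lo1 up1; rewrite /= expn1 expn0 subn0 => -> ->.
- by apply/eqP; rewrite eqn_leq; move: lo2 up2; rewrite /= expn1 subn0 => -> ->.
- by move=> l l_ge3; apply/andP/optical_index_bounds => //; lia.
Qed.
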